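(* Let $X\neq\emptyset$ be a set, $\Phi$ a nonempty set of bounded functions $X\to\mathbb{R}$ that is compact with respect to $D_\Phi$, and assume $(X,D_X)$ is complete. Let $G$ be a subgroup of $\mathrm{Homeo}_\Phi(X)$, equipped with the pseudo-metric $D_G$. Then $G$ is a topological group with respect to the topology induced by $D_G$ (composition $G\times G\to G$ and inversion $G\to G$ are continuous), and the right action $\Phi\times G\to\Phi$, $(\varphi,g)\mapsto\varphi\circ g$, is continuous (with respect to $D_\Phi$ and $D_G$).
   Context: $D_\Phi(\varphi_1,\varphi_2):=\|\varphi_1-\varphi_2\|_\infty$. $D_X(x_1,x_2):=\sup_{\varphi\in\Phi}|\varphi(x_1)-\varphi(x_2)|$. $\mathrm{Homeo}_\Phi(X)$ is the group of bijections $g:X\to X$ that are homeomorphisms for the topology of $D_X$ and satisfy $\varphi\circ g\in\Phi$ and $\varphi\circ g^{-1}\in\Phi$ for all $\varphi\in\Phi$. For $g_1,g_2\in G$, $D_G(g_1,g_2):=\sup_{\varphi\in\Phi}D_\Phi(\varphi\circ g_1,\varphi\circ g_2)$. *)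

From Stdlib Require Import Reals Lra List Classical ClassicalEpsilon.
Open Scope R_scope.

(* Supremum of a set of reals: the least upper bound when the set is
   nonempty and bounded above, and 0 otherwise (never used in that case
   for the statement, since all sets involved are bounded and nonempty). *)
Definition Rsup (E : R -> Prop) : R :=
  match excluded_middle_informative (bound E /\ exists x, E x) with
  | left H => proj1_sig (completeness E (proj1 H) (proj2 H))
  | right _ => 0
  end.

Definition DPhi {X : Type} (f1 f2 : X -> R) : R :=
  Rsup (fun r => exists x : X, r = Rabs (f1 x - f2 x)).

Definition DX {X : Type} (Phi : (X -> R) -> Prop) (x1 x2 : X) : R :=
  Rsup (fun r => exists phi, Phi phi /\ r = Rabs (phi x1 - phi x2)).

Definition DG {X : Type} (Phi : (X -> R) -> Prop) (g1 g2 : X -> X) : R :=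
  Rsup (fun r => exists phi, Phi phi /\
          r = DPhi (fun x => phi (g1 x)) (fun x => phi (g2 x))).

Definition bounded_fun {X : Type} (f : X -> R) : Prop :=
  exists M, forall x, Rabs (f x) <= M.

Definition open_in_Phi {X : Type} (Phi : (X -> R) -> Prop)
  (U : (X -> R) -> Prop) : Prop :=
  forall phi, Phi phi -> U phi ->
    exists r, 0 < r /\ forall psi, Phi psi -> DPhi phi psi < r -> U psi.

Definition compact_Phi {X : Type} (Phi : (X -> R) -> Prop) : Prop :=
  forall (I : Type) (U : I -> (X -> R) -> Prop),
    (forall i, open_in_Phi Phi (U i)) ->
    (forall phi, Phi phi -> exists i, U i phi) ->
    exists l : list I, forall phi, Phi phi -> exists i, In i l /\ U i phi.

Definition complete_DX {X : Type} (Phi : (X -> R) -> Prop) : Prop :=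
  forall u : nat -> X,
    (forall eps, 0 < eps -> exists N, forall m n, (N <= m)%nat -> (N <= n)%nat ->
        DX Phi (u m) (u n) < eps) ->
    exists x, forall eps, 0 < eps -> exists N, forall n, (N <= n)%nat ->
        DX Phi (u n) x < eps.

Definition continuous_DX {X : Type} (Phi : (X -> R) -> Prop) (g : X -> X) : Prop :=
  forall x eps, 0 < eps -> exists delta, 0 < delta /\
    forall y, DX Phi x y < delta -> DX Phi (g x) (g y) < eps.

Definition inverse_of {X : Type} (g gi : X -> X) : Prop :=
  (forall x, gi (g x) = x) /\ (forall x, g (gi x) = x).

Definition in_Homeo_Phi {X : Type} (Phi : (X -> R) -> Prop) (g : X -> X) : Prop :=
  exists gi, inverse_of g gi /\
    continuous_DX Phi g /\ continuous_DX Phi gi /\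
    (forall phi, Phi phi -> Phi (fun x => phi (g x)) /\ Phi (fun x => phi (gi x))).

Definition subgroup_Homeo_Phi {X : Type} (Phi : (X -> R) -> Prop)
  (G : (X -> X) -> Prop) : Prop :=
  (forall g, G g -> in_Homeo_Phi Phi g) /\
  G (fun x => x) /\
  (forall g h, G g -> G h -> G (fun x => g (h x))) /\
  (forall g, G g -> exists gi, G gi /\ inverse_of g gi).

(* Compactness of Phi makes it uniformly bounded, so D_G(g1, g2) is the
   supremum of |phi (g1 x) - phi (g2 x)| over phi in Phi and x in X.  Since
   every element of G maps Phi into itself by precomposition, precomposing a
   competitor phi with g (resp. with the inverse) turns this description into
   the estimates
     D_G(g h, g' h') <= D_G(h, h') + D_G(g, g'),
     D_G(g^-1, h^-1) <= D_G(g, h),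
     D_Phi(phi o g, psi o h) <= D_G(g, h) + D_Phi(phi, psi),
   from which the three continuity statements follow at once. *)

From Stdlib Require Import Reals List Classical ClassicalEpsilon Lra.
Open Scope R_scope.

Lemma Rsup_ub (E : R -> Prop) (r : R) : bound E -> E r -> r <= Rsup E.
Proof.
  intros Hb Hr. unfold Rsup.
  destruct (excluded_middle_informative _) as [H | H].
  - destruct (completeness E _ _) as [s [Hub Hleast]]. exact (Hub r Hr).
  - exfalso. apply H. split; [exact Hb | exists r; exact Hr].
Qed.

Lemma Rsup_le (E : R -> Prop) (b : R) :
  (exists r, E r) -> (forall r, E r -> r <= b) -> Rsup E <= b.
Proof.
  intros He Hb. unfold Rsup.
  destruct (excluded_middle_informative _) as [H | H].
  - destruct (completeness E _ _) as [s [Hub Hleast]]. exact (Hleast b Hb).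
  - exfalso. apply H. split; [exists b; exact Hb | exact He].
Qed.

Lemma Rabs_sub_triang (a b c : R) : Rabs (a - c) <= Rabs (a - b) + Rabs (b - c).
Proof. exact (Rdist_tri a c b). Qed.

Lemma Rabs_sub_le (a b : R) : Rabs (a - b) <= Rabs a + Rabs b.
Proof. unfold Rminus. rewrite <- (Rabs_Ropp b). apply Rabs_triang. Qed.

Lemma DPhi_ub {X : Type} (f1 f2 : X -> R) (x : X) :
  bounded_fun f1 -> bounded_fun f2 -> Rabs (f1 x - f2 x) <= DPhi f1 f2.
Proof.
  intros [M1 H1] [M2 H2]. apply Rsup_ub.
  - exists (M1 + M2). intros r [y ->].
    pose proof (Rabs_sub_le (f1 y) (f2 y)). specialize (H1 y). specialize (H2 y). lra.
  - exists x. reflexivity.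
Qed.

Lemma DPhi_le {X : Type} (f1 f2 : X -> R) (b : R) :
  inhabited X -> (forall x, Rabs (f1 x - f2 x) <= b) -> DPhi f1 f2 <= b.
Proof.
  intros [x0] H. apply Rsup_le.
  - exists (Rabs (f1 x0 - f2 x0)), x0. reflexivity.
  - intros r [y ->]. apply H.
Qed.

(* Cover Phi by the open sets "bounded by some c < n", n : nat. *)
Lemma compact_Phi_uniformly_bounded {X : Type} (Phi : (X -> R) -> Prop) :
  (forall phi, Phi phi -> bounded_fun phi) -> compact_Phi Phi ->
  exists B, forall phi, Phi phi -> forall x, Rabs (phi x) <= B.
Proof.
  intros Hbd Hcpt.
  destruct (Hcpt nat (fun n psi => exists c, c < INR n /\ forall x, Rabs (psi x) <= c))
    as [l Hl].
  - intros n psi Hpsi [c [Hcn Hc]]. exists (INR n - c). split; [lra |].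
    intros psi' Hpsi' Hd. exists (c + DPhi psi psi'). split; [lra |].
    intros x.
    pose proof (DPhi_ub psi psi' x (Hbd _ Hpsi) (Hbd _ Hpsi')).
    pose proof (Rabs_triang (psi x) (psi' x - psi x)) as T.
    replace (psi x + (psi' x - psi x)) with (psi' x) in T by ring.
    rewrite Rabs_minus_sym in T. specialize (Hc x). lra.
  - intros phi Hphi. destruct (Hbd _ Hphi) as [M HM].
    destruct (INR_unbounded M) as [n Hn]. exists n, M. split; [lra | exact HM].
  - assert (Hmax : exists B, forall i, In i l -> INR i <= B).
    { clear Hl. induction l as [| a l [B HB]].
      - exists 0. intros i [].
      - exists (Rmax (INR a) B). intros i [<- | Hi].
        + apply Rmax_l.
        + eapply Rle_trans; [exact (HB i Hi) | apply Rmax_r]. }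
    destruct Hmax as [B HB]. exists B. intros phi Hphi x.
    destruct (Hl phi Hphi) as [i [Hi [c [Hci Hc]]]].
    specialize (Hc x). specialize (HB i Hi). lra.
Qed.

Definition preserves_Phi {X : Type} (Phi : (X -> R) -> Prop) (g : X -> X) : Prop :=
  forall phi, Phi phi -> Phi (fun x => phi (g x)).

Lemma subgroup_preserves_Phi {X : Type} (Phi : (X -> R) -> Prop) (G : (X -> X) -> Prop)
  (g : X -> X) : subgroup_Homeo_Phi Phi G -> G g -> preserves_Phi Phi g.
Proof.
  intros [Hhomeo _] Hg phi Hphi.
  destruct (Hhomeo g Hg) as [gi [_ [_ [_ Hpres]]]]. exact (proj1 (Hpres phi Hphi)).
Qed.

Section UniformlyBounded.

Variables (X : Type) (Phi : (X -> R) -> Prop) (B : R).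
Hypothesis hX : inhabited X.
Hypothesis hPhi_ne : exists phi, Phi phi.
Hypothesis hB : forall phi, Phi phi -> forall x, Rabs (phi x) <= B.

Lemma DG_ub (g1 g2 : X -> X) (phi : X -> R) (x : X) :
  preserves_Phi Phi g1 -> preserves_Phi Phi g2 -> Phi phi ->
  Rabs (phi (g1 x) - phi (g2 x)) <= DG Phi g1 g2.
Proof.
  intros Hg1 Hg2 Hphi.
  assert (Hbd : forall psi, Phi psi -> bounded_fun psi) by (intros psi Hpsi; exists B; auto).
  eapply Rle_trans.
  - exact (DPhi_ub (fun y => phi (g1 y)) (fun y => phi (g2 y)) x
             (Hbd _ (Hg1 _ Hphi)) (Hbd _ (Hg2 _ Hphi))).
  - apply Rsup_ub.
    + exists (B + B). intros r [psi [Hpsi ->]]. apply DPhi_le; [exact hX |]. intros y.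
      pose proof (Rabs_sub_le (psi (g1 y)) (psi (g2 y))).
      pose proof (hB _ (Hg1 _ Hpsi) y). pose proof (hB _ (Hg2 _ Hpsi) y). simpl in *. lra.
    + exists phi. split; [exact Hphi | reflexivity].
Qed.

Lemma DG_le (g1 g2 : X -> X) (b : R) :
  (forall phi x, Phi phi -> Rabs (phi (g1 x) - phi (g2 x)) <= b) -> DG Phi g1 g2 <= b.
Proof.
  intros H. apply Rsup_le.
  - destruct hPhi_ne as [phi Hphi]. eexists. exists phi. split; [exact Hphi | reflexivity].
  - intros r [psi [Hpsi ->]]. apply DPhi_le; [exact hX |]. intros y. exact (H psi y Hpsi).
Qed.

Lemma DG_comp_le (g g' h h' : X -> X) :
  preserves_Phi Phi g -> preserves_Phi Phi g' ->
  preserves_Phi Phi h -> preserves_Phi Phi h' ->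
  DG Phi (fun x => g (h x)) (fun x => g' (h' x)) <= DG Phi h h' + DG Phi g g'.
Proof.
  intros Hg Hg' Hh Hh'. apply DG_le. intros phi x Hphi.
  pose proof (DG_ub h h' (fun y => phi (g y)) x Hh Hh' (Hg _ Hphi)).
  pose proof (DG_ub g g' phi (h' x) Hg Hg' Hphi).
  pose proof (Rabs_sub_triang (phi (g (h x))) (phi (g (h' x))) (phi (g' (h' x)))).
  simpl in *. lra.
Qed.

(* Evaluate phi o g^-1 at the point h^-1 x. *)
Lemma DG_inv_le (g gi h hi : X -> X) :
  inverse_of g gi -> inverse_of h hi ->
  preserves_Phi Phi g -> preserves_Phi Phi h -> preserves_Phi Phi gi ->
  DG Phi gi hi <= DG Phi g h.
Proof.
  intros [Hgig _] [_ Hhhi] Hg Hh Hgi. apply DG_le. intros phi x Hphi.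
  pose proof (DG_ub g h (fun y => phi (gi y)) (hi x) Hg Hh (Hgi _ Hphi)) as E.
  simpl in E. rewrite Hhhi, Hgig in E. rewrite Rabs_minus_sym. exact E.
Qed.

Lemma DPhi_action_le (phi psi : X -> R) (g h : X -> X) :
  Phi phi -> Phi psi -> preserves_Phi Phi g -> preserves_Phi Phi h ->
  DPhi (fun x => phi (g x)) (fun x => psi (h x)) <= DG Phi g h + DPhi phi psi.
Proof.
  intros Hphi Hpsi Hg Hh. apply DPhi_le; [exact hX |]. intros x.
  assert (Hbd : forall f, Phi f -> bounded_fun f) by (intros f Hf; exists B; auto).
  pose proof (DG_ub g h phi x Hg Hh Hphi).
  pose proof (DPhi_ub phi psi (h x) (Hbd _ Hphi) (Hbd _ Hpsi)).
  pose proof (Rabs_sub_triang (phi (g x)) (phi (h x)) (psi (h x))).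
  lra.
Qed.

End UniformlyBounded.

Theorem mainTheorem5 (X : Type) (Phi : (X -> R) -> Prop) (G : (X -> X) -> Prop)
  (hX : inhabited X)
  (hPhi_ne : exists phi, Phi phi)
  (hPhi_bd : forall phi, Phi phi -> bounded_fun phi)
  (hPhi_cpt : compact_Phi Phi)
  (hX_cpl : complete_DX Phi)
  (hG : subgroup_Homeo_Phi Phi G) :
  (* composition G x G -> G is continuous *)
  (forall g h, G g -> G h ->
     forall eps, 0 < eps -> exists delta, 0 < delta /\
       forall g' h', G g' -> G h' -> DG Phi g g' < delta -> DG Phi h h' < delta ->
         DG Phi (fun x => g (h x)) (fun x => g' (h' x)) < eps) /\
  (* inversion G -> G is continuous *)
  (forall g gi, G g -> G gi -> inverse_of g gi ->
     forall eps, 0 < eps -> exists delta, 0 < delta /\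
       forall h hi, G h -> G hi -> inverse_of h hi ->
         DG Phi g h < delta -> DG Phi gi hi < eps) /\
  (* the right action Phi x G -> Phi, (phi, g) |-> phi o g, is continuous *)
  (forall phi g, Phi phi -> G g ->
     forall eps, 0 < eps -> exists delta, 0 < delta /\
       forall psi h, Phi psi -> G h -> DPhi phi psi < delta -> DG Phi g h < delta ->
         DPhi (fun x => phi (g x)) (fun x => psi (h x)) < eps).
Proof.
  destruct (compact_Phi_uniformly_bounded Phi hPhi_bd hPhi_cpt) as [B hB].
  pose proof (subgroup_preserves_Phi Phi G) as Hpres.
  split; [| split].
  - intros g h Hg Hh eps Heps. exists (eps / 2). split; [lra |].
    intros g' h' Hg' Hh' Dg Dh.
    pose proof (DG_comp_le X Phi B hX hPhi_ne hB g g' h h'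
                  (Hpres g hG Hg) (Hpres g' hG Hg') (Hpres h hG Hh) (Hpres h' hG Hh')).
    lra.
  - intros g gi Hg Hgi Hinvg eps Heps. exists eps. split; [exact Heps |].
    intros h hi Hh _ Hinvh D.
    pose proof (DG_inv_le X Phi B hX hPhi_ne hB g gi h hi Hinvg Hinvh
                  (Hpres g hG Hg) (Hpres h hG Hh) (Hpres gi hG Hgi)).
    lra.
  - intros phi g Hphi Hg eps Heps. exists (eps / 2). split; [lra |].
    intros psi h Hpsi Hh Dphi Dg.
    pose proof (DPhi_action_le X Phi B hX hB phi psi g h Hphi Hpsi
                  (Hpres g hG Hg) (Hpres h hG Hh)).
    lra.
Qed.
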